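(* Let $H$ be a real Hilbert space, $C\subseteq H$ nonempty, closed and convex, and $F:H\to H$ an operator such that (A1) $S_D\neq\emptyset$; (A2) $F$ is quasimonotone; (A3) $F$ is uniformly continuous on $H$. Let $\{z_n\},\{w_n\}$ be the sequences generated by Algorithm 3.1 (with $\epsilon=0$), and assume $z_n\neq w_n$ for all $n$. Then: (i) for every $x^\ell\in S_D$, $\lim_{n\to\infty}\|z_n-x^\ell\|$ exists; (ii) $\lim_{n\to\infty}\|z_n-w_n\|=0$ and $\lim_{n\to\infty}\|z_{n+1}-z_n\|=0$.
   Context: $P_C$ denotes the metric projection onto $C$. $S$ is the solution set of the variational inequality: $x\in C$ with $\langle F(x),w-x\rangle\ge 0$ for all $w\in C$. $S_D$ is the set of $z\in C$ with $\langle F(v),v-z\rangle\ge0$ for all $v\in C$. $F$ is quasimonotone if $\langle F(w),z-w\rangle>0$ implies $\langle F(z),z-w\rangle\ge0$ for all $w,z\in H$. Algorithm 3.1 (with $\epsilon=0$): fix $\mu\in(0,1)$, a sequence $\{\xi_n\}\subset[0,\infty)$ with $\sum_{n}\xi_n<\infty$, $z_1\in H$ and $\lambda_1>0$. For $n=1,2,\dots$: $w_n=P_C(z_n-\lambda_nF(z_n))$; $z_{n+1}=w_n+\lambda_n(F(z_n)-F(w_n))$; $\lambda_{n+1}=\min\{\frac{\mu\|z_n-w_n\|}{\|F(z_n)-F(w_n)\|},\lambda_n+\xi_n\}$ if $F(z_n)\neq F(w_n)$, and $\lambda_{n+1}=\lambda_n+\xi_n$ otherwise. (If $z_n=w_n$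 the algorithm would stop; here it is assumed this never happens.) *)

From HB Require Import structures.
From mathcomp Require Import all_boot all_order all_algebra.
From mathcomp Require Import all_classical all_reals all_analysis.
Set Implicit Arguments. Unset Strict Implicit. Unset Printing Implicit Defensive.
Import Order.TTheory GRing.Theory Num.Theory.
Import numFieldNormedType.Exports.
Local Open Scope classical_set_scope.
Local Open Scope ring_scope.

(* A real Hilbert space is modelled as a complete normed space V over R
   together with a real inner product inducing its norm. *)
Definition is_inner_product (R : realType) (V : normedModType R)
  (ip : V -> V -> R) : Prop :=
  [/\ (forall x y, ip x y = ip y x),
      (forall x y z, ip (x + y) z = ip x z + ip y z),
      (forall (a : R) x y, ip (a *: x) y = a * ip x y) &
      (forall x, ip x x = `|x| ^+ 2)].

Definition is_convex_set (R : realType) (V : normedModType R) (C : set V) : Prop :=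
  forall x y (t : R), C x -> C y -> 0 <= t <= 1 -> C (t *: x + (1 - t) *: y).

Definition is_metric_projection (R : realType) (V : normedModType R)
  (C : set V) (P : V -> V) : Prop :=
  forall x, C (P x) /\ (forall y, C y -> `|x - P x| <= `|x - y|).

Definition SD (R : realType) (V : normedModType R) (ip : V -> V -> R)
  (C : set V) (F : V -> V) : set V :=
  [set z | C z /\ forall v, C v -> 0 <= ip (F v) (v - z)].

Definition quasimonotone (R : realType) (V : normedModType R)
  (ip : V -> V -> R) (F : V -> V) : Prop :=
  forall w z, 0 < ip (F w) (z - w) -> 0 <= ip (F z) (z - w).

Definition unif_continuous_op (R : realType) (V : normedModType R) (F : V -> V) : Prop :=
  forall e : R, 0 < e -> exists2 d : R, 0 < d &
    forall x y, `|x - y| < d -> `|F x - F y| < e.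

(* Algorithm 3.1 with epsilon = 0, indexed from 0 (z 0 = z_1, lam 0 = lambda_1). *)
Definition algorithm31 (R : realType) (V : normedModType R)
  (P : V -> V) (F : V -> V) (mu : R) (xi : nat -> R)
  (z w : nat -> V) (lam : nat -> R) : Prop :=
  forall n,
    [/\ w n = P (z n - lam n *: F (z n)),
        z n.+1 = w n + lam n *: (F (z n) - F (w n)) &
        lam n.+1 = (if F (z n) != F (w n) then
                      Num.min (mu * `|z n - w n| / `|F (z n) - F (w n)|) (lam n + xi n)
                    else lam n + xi n)].

From HB Require Import structures.
From mathcomp Require Import all_boot all_order all_algebra.
From mathcomp Require Import all_classical all_reals all_analysis.
From mathcomp Require Import ring lra.
Import Order.TTheory GRing.Theory Num.Theory.
Import numFieldNormedType.Exports.
Local Open Scope classical_set_scope.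
Local Open Scope ring_scope.

Set Implicit Arguments. Unset Strict Implicit. Unset Printing Implicit Defensive.

(* For x in S_D, the projection inequality at w n and the Minty inequality
   <F (w n), w n - x> >= 0 give Tseng's estimate
     |z n.+1 - x|^2 <= |z n - x|^2 - |z n - w n|^2 + (lam n * |F (z n) - F (w n)|)^2.
   The step-size rule gives lam n.+1 * |F (z n) - F (w n)| <= mu * |z n - w n|,
   and the decreases d n := max(0, lam n - lam n.+1) are summable because the
   increases are bounded by the summable xi n. A uniformly continuous map has
   affine growth |F x - F y| <= A + B |x - y|, hence eventually
     lam n * |F (z n) - F (w n)| <= (1 + mu) / 2 * |z n - w n| + A * d n,
   and |z n - x|^2 is quasi-Fejer:
     |z n.+1 - x|^2 + (1 - mu) / 2 * |z n - w n|^2 <= |z n - x|^2 + K * d n.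
   This yields the convergence of |z n - x| and the summability of |z n - w n|^2;
   finally |z n.+1 - z n| <= |z n - w n| + lam n * |F (z n) - F (w n)|. *)

Section InnerProduct.
Variables (R : realType) (V : normedModType R) (ip : V -> V -> R).
Hypothesis hip : is_inner_product ip.

Lemma ipC x y : ip x y = ip y x. Proof. by case: hip. Qed.

Lemma ipDl x y z : ip (x + y) z = ip x z + ip y z. Proof. by case: hip. Qed.

Lemma ipZl (a : R) x y : ip (a *: x) y = a * ip x y. Proof. by case: hip. Qed.

Lemma ip_normE x : ip x x = `|x| ^+ 2. Proof. by case: hip. Qed.

Lemma ipNl x y : ip (- x) y = - ip x y.
Proof. by rewrite -scaleN1r ipZl mulN1r. Qed.

Lemma ipBl x y z : ip (x - y) z = ip x z - ip y z.
Proof. by rewrite ipDl ipNl. Qed.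

Lemma ipZr (a : R) x y : ip x (a *: y) = a * ip x y.
Proof. by rewrite ipC ipZl ipC. Qed.

Lemma ipNr x y : ip x (- y) = - ip x y.
Proof. by rewrite ipC ipNl ipC. Qed.

Lemma ipBr x y z : ip x (y - z) = ip x y - ip x z.
Proof. by rewrite ipC ipBl !(ipC x). Qed.

Lemma normD_sqr x y : `|x + y| ^+ 2 = `|x| ^+ 2 + 2 * ip x y + `|y| ^+ 2.
Proof. by rewrite -!ip_normE !ipDl !(ipC _ (x + y)) !ipDl (ipC y x); ring. Qed.

Lemma normB_sqr x y : `|x - y| ^+ 2 = `|x| ^+ 2 - 2 * ip x y + `|y| ^+ 2.
Proof. by rewrite normD_sqr (ipC x) ipNl (ipC _ x) normrN; ring. Qed.

End InnerProduct.

Lemma le0_of_forall_le_tmul (R : realFieldType) (s K : R) :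
  (forall t, 0 < t <= 1 -> s <= t * K) -> s <= 0.
Proof.
move=> sK; rewrite leNgt; apply/negP => s_gt0.
have sK_gt0 : 0 < s + `|K| by rewrite ltr_wpDr.
set t := s / (s + `|K|).
have t_gt0 : 0 < t by rewrite divr_gt0.
have t_le1 : t <= 1 by rewrite ler_pdivrMr // mul1r lerDl.
have tK : t * K <= t * `|K| by apply: ler_wpM2l; [exact: ltW | exact: ler_norm].
have tKs : t * `|K| < s.
  by rewrite /t mulrAC ltr_pdivrMr // mulrDr ltr_pwDl // mulr_gt0.
by have := sK t; rewrite t_gt0 t_le1 => /(_ isT); lra.
Qed.

(* First-order optimality of P q against the competitors t y + (1 - t) P q. *)
Lemma metric_projection_ip_le0 (R : realType) (V : normedModType R)
    (ip : V -> V -> R) (C : set V) (P : V -> V) :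
  is_inner_product ip -> is_convex_set C -> is_metric_projection C P ->
  forall q y, C y -> ip (q - P q) (y - P q) <= 0.
Proof.
move=> hip C_cvx P_proj q y Cy; have [CPq P_min] := P_proj q.
apply: (@le0_of_forall_le_tmul _ _ (`|y - P q| ^+ 2 / 2)) => t /andP[t_gt0 t_le1].
have Ct : C (t *: y + (1 - t) *: P q) by apply: C_cvx => //; rewrite (ltW t_gt0).
have := P_min _ Ct.
have -> : q - (t *: y + (1 - t) *: P q) = (q - P q) - t *: (y - P q).
  rewrite scalerBl scale1r scalerBr !opprD !opprK !addrA.
  by congr (_ + _); rewrite addrAC.
move=> le_dist; have := ler_pM (normr_ge0 _) (normr_ge0 _) le_dist le_dist.
rewrite -!expr2 (normB_sqr hip (q - P q)) (ipZr hip) normrZ gtr0_norm // exprMn; nra.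
Qed.

Lemma tseng_step_dist_sqr_le (R : realType) (V : normedModType R)
    (ip : V -> V -> R) (C : set V) (P F : V -> V) (x z w z' : V) (l : R) :
  is_inner_product ip -> is_convex_set C -> is_metric_projection C P ->
  SD ip C F x -> 0 <= l ->
  w = P (z - l *: F z) -> z' = w + l *: (F z - F w) ->
  `|z' - x| ^+ 2 <= `|z - x| ^+ 2 - `|z - w| ^+ 2 + (l * `|F z - F w|) ^+ 2.
Proof.
move=> hip C_cvx P_proj [Cx x_SD] l_ge0 w_def ->.
have Cw : C w by rewrite w_def; have [] := P_proj (z - l *: F z).
have proj : l * ip (F z) (w - x) <= ip (z - w) (w - x).
  have := metric_projection_ip_le0 hip C_cvx P_proj (z - l *: F z) Cx.
  rewrite -w_def (addrAC z) -(opprB w x) (ipNr hip) (ipBl hip) (ipZl hip); lra.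
have Fw_SD := x_SD w Cw.
have -> : z - x = (z - w) + (w - x) by rewrite addrA subrK.
have -> : w + l *: (F z - F w) - x = (w - x) + l *: (F z - F w) by rewrite addrAC.
rewrite !(normD_sqr hip) (ipZr hip) (ipBr hip) !(ipC hip (w - x)).
rewrite normrZ ger0_norm // exprMn; nra.
Qed.

Lemma near_step_nonincreasing_is_cvgn (R : realType) (u : R ^nat) (m : R) :
  (\forall n \near \oo, u n.+1 <= u n) -> (forall n, m <= u n) -> cvgn u.
Proof.
case=> N _ u_dec u_ge.
suff : cvgn (fun n => u (n + N)%N).
  by case/cvg_ex => l; rewrite cvg_shiftn => ul; apply/cvg_ex; exists l.
apply: nonincreasing_is_cvgn; last by exists m => _ [n _ <-].
by apply/nonincreasing_seqP => n; rewrite addSn; apply: u_dec; rewrite /= leq_addl.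
Qed.

Lemma quasi_fejer_is_cvgn (R : realType) (a g b : R ^nat) :
  (forall n, 0 <= a n) -> (forall n, 0 <= g n) -> (forall n, 0 <= b n) ->
  cvgn (series b) ->
  (\forall n \near \oo, a n.+1 + g n <= a n + b n) ->
  cvgn a /\ cvgn (series g).
Proof.
move=> a_ge0 g_ge0 b_ge0 b_sum a_step.
have b_le n : series b n <= limn (series b).
  apply: nondecreasing_cvgn_le b_sum _ => //; apply/nondecreasing_seqP => k.
  by rewrite seriesSr lerDl.
have g_sum_ge0 n : 0 <= series g n by rewrite seriesEnat /=; apply: sumr_ge0.
have ab_cvg : cvgn (fun n => a n - series b n).
  apply: (@near_step_nonincreasing_is_cvgn _ _ (- limn (series b))).
    by apply: filterS a_step => n; rewrite seriesSr; have := g_ge0 n; lra.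
  by move=> n; have := a_ge0 n; have := b_le n; lra.
have abg_cvg : cvgn (fun n => a n - series b n + series g n).
  apply: (@near_step_nonincreasing_is_cvgn _ _ (- limn (series b))).
    by apply: filterS a_step => n; rewrite !seriesSr; lra.
  by move=> n; have := a_ge0 n; have := b_le n; have := g_sum_ge0 n; lra.
split.
  have -> : a = (fun n => a n - series b n) + series b.
    by apply/funext => n /=; rewrite subrK.
  exact: is_cvgD.
have -> : series g = (fun n => a n - series b n + series g n) - (fun n => a n - series b n).
  by apply/funext => n /=; rewrite addrAC subrr add0r.
exact: is_cvgB.
Qed.

Lemma cvg_sqrt_sqr (R : realType) (u : R ^nat) (l : R) :
  (forall n, 0 <= u n) -> (fun n => u n ^+ 2) @ \oo --> l -> u @ \oo --> Num.sqrt l.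
Proof.
move=> u_ge0 u2l.
have -> : u = Num.sqrt \o (fun n => u n ^+ 2).
  by apply/funext => n /=; rewrite sqrtr_sqr ger0_norm.
by apply: continuous_cvg u2l; exact: sqrt_continuous.
Qed.

Lemma sqr_le_affine (R : realFieldType) (m A d s y : R) :
  0 <= m < 1 -> 0 <= d -> 0 <= s -> 0 <= y <= m * d + A * s ->
  y ^+ 2 <= m * d ^+ 2 + A ^+ 2 / (1 - m) * s ^+ 2.
Proof.
move=> /andP[m_ge0 m_lt1] d_ge0 s_ge0 /andP[y_ge0 y_le].
have m1_gt0 : 0 < 1 - m by rewrite subr_gt0.
have young : (m * d + A * s) ^+ 2 <= m * d ^+ 2 + A ^+ 2 / (1 - m) * s ^+ 2.
  rewrite -(ler_pM2r m1_gt0).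
  have -> : (m * d ^+ 2 + A ^+ 2 / (1 - m) * s ^+ 2) * (1 - m) =
            m * (1 - m) * d ^+ 2 + A ^+ 2 * s ^+ 2 by field; rewrite gt_eqF.
  (* the difference of the two sides is m * ((1 - m) * d - A * s) ^+ 2 *)
  by have := mulr_ge0 m_ge0 (sqr_ge0 ((1 - m) * d - A * s)); nra.
have y_sq : y ^+ 2 <= (m * d + A * s) ^+ 2 by rewrite !expr2; apply: ler_pM.
exact: le_trans y_sq young.
Qed.

Lemma unif_continuous_op_affine (R : realType) (V : normedModType R) (F : V -> V) :
  unif_continuous_op F ->
  exists2 B : R, 0 <= B & forall x y, `|F x - F y| <= 1 + B * `|x - y|.
Proof.
move=> F_uc; have [d d_gt0 F_d] := F_uc 1 ltr01.
have chain N x y : `|x - y| < N.+1%:R * d -> `|F x - F y| < N.+1%:R.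
  elim: N x y => [|N IH] x y xy; first by apply: F_d; rewrite mul1r in xy.
  set n1 : R := N.+1%:R; have n1_gt0 : 0 < n1 by rewrite ltr0n.
  set r := n1 / (n1 + 1).
  have r_eq : r * (n1 + 1) = n1 by rewrite /r mulfVK // gt_eqF // ltr_wpDr.
  have r_ge0 : 0 <= r by rewrite divr_ge0 // ltW // ltr_wpDr.
  have r_le1 : 0 <= 1 - r by nra.
  set m := y + r *: (x - y).
  have my : `|m - y| = r * `|x - y| by rewrite /m addrAC subrr add0r normrZ ger0_norm.
  have xm : `|x - m| = (1 - r) * `|x - y|.
    by rewrite /m opprD addrA -{1}(scale1r (x - y)) -scalerBl normrZ ger0_norm.
  move: xy; rewrite -natr1 -/n1 => xy; have := normr_ge0 (x - y) => xy_ge0.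
  have Fxm : `|F x - F m| < 1 by apply: F_d; rewrite xm; nra.
  have Fmy : `|F m - F y| < n1 by apply: IH; rewrite my; nra.
  by have := ler_distD (F m) (F x) (F y); lra.
exists d^-1; first by rewrite invr_ge0 ltW.
move=> x y; set N := Num.truncn (`|x - y| / d).
have N_gt : `|x - y| / d < N.+1%:R by exact: truncnS_gt.
have N_le : N%:R <= `|x - y| / d by rewrite truncn_le divr_ge0 // ltW.
have := chain N x y; rewrite -ltr_pdivrMr // => /(_ N_gt).
by rewrite -natr1 mulrC; lra.
Qed.

Section Algorithm31.
Variables (R : realType) (V : normedModType R) (ip : V -> V -> R).
Variables (C : set V) (P F : V -> V) (mu A B : R) (xi lam : R ^nat) (z w : V ^nat).
Hypotheses (hip : is_inner_product ip) (C_cvx : is_convex_set C).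
Hypothesis P_proj : is_metric_projection C P.
Hypotheses (B_ge0 : 0 <= B) (F_affine : forall x y, `|F x - F y| <= A + B * `|x - y|).
Hypotheses (mu_gt0 : 0 < mu) (mu_lt1 : mu < 1).
Hypotheses (xi_ge0 : forall n, 0 <= xi n) (xi_sum : cvgn (series xi)).
Hypotheses (lam0_gt0 : 0 < lam 0) (alg : algorithm31 P F mu xi z w lam).
Hypothesis z_neq_w : forall n, z n != w n.

Let lam_drop n := Num.max 0 (lam n - lam n.+1).
Let K := A ^+ 2 / (1 - (1 + mu) / 2).

Lemma lam_gt0 n : 0 < lam n.
Proof.
elim: n => // n IH; have [_ _ ->] := alg n; have := xi_ge0 n.
case: ifP => [Fzw|_] xi_n; last by lra.
rewrite lt_min; apply/andP; split; last by lra.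
by rewrite divr_gt0 ?mulr_gt0 ?normr_gt0 ?subr_eq0 ?z_neq_w.
Qed.

Lemma lamS_dist_le n : lam n.+1 * `|F (z n) - F (w n)| <= mu * `|z n - w n|.
Proof.
have [_ _ ->] := alg n; case: ifPn => [Fzw|].
  by rewrite -ler_pdivlMr ?normr_gt0 ?subr_eq0 // ge_min lexx.
by rewrite negbK => /eqP ->; rewrite subrr normr0 mulr0 mulr_ge0 ?normr_ge0 ?ltW.
Qed.

Lemma lamS_le n : lam n.+1 <= lam n + xi n.
Proof. by have [_ _ ->] := alg n; case: ifP => _ //; rewrite ge_min lexx orbT. Qed.

Lemma lam_drop_ge0 n : 0 <= lam_drop n.
Proof. by rewrite le_max lexx. Qed.

Lemma lam_le_lamS_drop n : lam n <= lam n.+1 + lam_drop n.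
Proof.
have : lam n - lam n.+1 <= lam_drop n by rewrite le_max lexx orbT.
lra.
Qed.

Lemma lam_drop_summable : cvgn (series lam_drop).
Proof.
have lam_ge0 n : 0 <= lam n by exact/ltW/lam_gt0.
apply: (proj2 (quasi_fejer_is_cvgn lam_ge0 lam_drop_ge0 xi_ge0 xi_sum _)).
apply: nearW => n.
have : lam_drop n <= lam n + xi n - lam n.+1.
  by rewrite ge_max; apply/andP; split; have := lamS_le n; have := xi_ge0 n; lra.
lra.
Qed.

Lemma lam_drop_cvg0 : lam_drop @ \oo --> 0.
Proof. exact: cvg_series_cvg_0 lam_drop_summable. Qed.

(* lam n exceeds lam n.+1 by the vanishing amount lam_drop n, and the resulting
   error term B * lam_drop n * |z n - w n| is absorbed by half the gap between
   mu and 1. *)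
Lemma lam_dist_le_near : \forall n \near \oo,
  lam n * `|F (z n) - F (w n)| <= (1 + mu) / 2 * `|z n - w n| + A * lam_drop n.
Proof.
set eta := (1 - mu) / 2 / (B + 1).
have B1_gt0 : 0 < B + 1 by rewrite ltr_wpDl.
have eta_gt0 : 0 < eta by rewrite divr_gt0 // divr_gt0 // subr_gt0.
have eta_eq : eta * (B + 1) = (1 - mu) / 2 by rewrite mulfVK // gt_eqF.
move/cvgr0Pnorm_lt: lam_drop_cvg0 => /(_ eta eta_gt0); apply: filterS => n.
rewrite ger0_norm ?lam_drop_ge0 // => drop_lt.
set d := `|z n - w n|; set e := `|F (z n) - F (w n)|.
have d_ge0 : 0 <= d by exact: normr_ge0.
have e_ge0 : 0 <= e by exact: normr_ge0.
have dropB : lam_drop n * B * d <= (1 - mu) / 2 * d.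
  by apply: ler_wpM2r => //; have := lam_drop_ge0 n; nra.
have lam_e : lam n * e <= (lam n.+1 + lam_drop n) * e.
  by apply: ler_wpM2r => //; exact: lam_le_lamS_drop.
have drop_e : lam_drop n * e <= lam_drop n * (A + B * d).
  by apply: ler_wpM2l; [exact: lam_drop_ge0 | exact: F_affine].
have := lamS_dist_le n; rewrite -/d -/e; lra.
Qed.

Let K_ge0 : 0 <= K.
Proof. by apply: divr_ge0; [exact: sqr_ge0 | have := mu_lt1; lra]. Qed.

Lemma dist_sqr_fejer_near x : SD ip C F x -> \forall n \near \oo,
  `|z n.+1 - x| ^+ 2 + (1 - mu) / 2 * `|z n - w n| ^+ 2 <=
  `|z n - x| ^+ 2 + K * lam_drop n.
Proof.
move=> x_SD; near=> n.
have [w_def z_def _] := alg n.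
have step := tseng_step_dist_sqr_le hip C_cvx P_proj x_SD (ltW (lam_gt0 n)) w_def z_def.
have drop_sq : lam_drop n ^+ 2 <= lam_drop n.
  rewrite expr2 ler_piMl ?lam_drop_ge0 //; near: n.
  move/cvgr0Pnorm_lt: lam_drop_cvg0 => /(_ 1 ltr01); apply: filterS => n.
  by rewrite ger0_norm ?lam_drop_ge0 // => /ltW.
have lam_e_sq : (lam n * `|F (z n) - F (w n)|) ^+ 2 <=
    (1 + mu) / 2 * `|z n - w n| ^+ 2 + K * lam_drop n ^+ 2.
  apply: sqr_le_affine; [|exact: normr_ge0|exact: lam_drop_ge0|].
  - by apply/andP; split; have := mu_gt0; have := mu_lt1; lra.
  - apply/andP; split; last by near: n; exact: lam_dist_le_near.
    by apply: mulr_ge0; [exact: ltW (lam_gt0 n) | exact: normr_ge0].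
have := ler_wpM2l K_ge0 drop_sq; lra.
Unshelve. all: by end_near. Qed.

Lemma dist_sqr_cvgn x : SD ip C F x ->
  cvgn (fun n => `|z n - x| ^+ 2) /\
  cvgn (series (fun n => (1 - mu) / 2 * `|z n - w n| ^+ 2)).
Proof.
move=> x_SD; apply: quasi_fejer_is_cvgn (dist_sqr_fejer_near x_SD).
- by move=> n; exact: sqr_ge0.
- by move=> n; rewrite mulr_ge0 ?sqr_ge0 // divr_ge0 // subr_ge0 ltW.
- by move=> n; rewrite mulr_ge0 ?K_ge0 ?lam_drop_ge0.
- exact: is_cvg_seriesZ lam_drop_summable.
Qed.

Lemma dist_zw_cvg0 x : SD ip C F x -> (fun n => `|z n - w n|) @ \oo --> 0.
Proof.
move=> /dist_sqr_cvgn[_ /cvg_series_cvg_0 c_sqr0].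
have c_gt0 : 0 < (1 - mu) / 2 by rewrite divr_gt0 // subr_gt0.
rewrite -sqrtr0; apply: cvg_sqrt_sqr => [n|]; first exact: normr_ge0.
have -> : (fun n => `|z n - w n| ^+ 2) =
    (fun n => ((1 - mu) / 2)^-1 * ((1 - mu) / 2 * `|z n - w n| ^+ 2)).
  by apply/funext => n; rewrite mulKf // gt_eqF.
by rewrite -(mulr0 ((1 - mu) / 2)^-1); apply: cvgMl_tmp.
Qed.

Theorem algorithm31_cvg x0 : SD ip C F x0 ->
  (forall x, SD ip C F x -> cvgn (fun n => `|z n - x|)) /\
  ((fun n => `|z n - w n|) @ \oo --> (0 : R)) /\
  ((fun n => `|z n.+1 - z n|) @ \oo --> (0 : R)).
Proof.
move=> x0_SD; split; [|split]; first 2 last.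
- apply: (@squeeze_cvgr _ _ _ _ (fun=> 0)
    (fun n => (1 + (1 + mu) / 2) * `|z n - w n| + A * lam_drop n)).
  + near=> n; rewrite normr_ge0 /=.
    have [_ z_def _] := alg n.
    have -> : z n.+1 - z n = (w n - z n) + lam n *: (F (z n) - F (w n)).
      by rewrite z_def addrAC.
    apply: le_trans (ler_normD _ _) _.
    rewrite normrZ gtr0_norm ?lam_gt0 // distrC.
    have : lam n * `|F (z n) - F (w n)| <= (1 + mu) / 2 * `|z n - w n| + A * lam_drop n.
      by near: n; exact: lam_dist_le_near.
    lra.
  + exact: cvg_cst.
  + have lim := cvgD (cvgMl_tmp (a := 1 + (1 + mu) / 2) (dist_zw_cvg0 x0_SD))
      (cvgMl_tmp (a := A) lam_drop_cvg0).
    by rewrite !mulr0 addr0 in lim; exact: lim.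
- move=> x /dist_sqr_cvgn[/cvg_ex[l dist_sqr_l] _].
  apply/cvg_ex; exists (Num.sqrt l); apply: cvg_sqrt_sqr dist_sqr_l => n.
  exact: normr_ge0.
- exact: dist_zw_cvg0 x0_SD.
Unshelve. all: by end_near. Qed.

End Algorithm31.

Theorem lemma4p2 (R : realType) (V : completeNormedModType R)
  (ip : V -> V -> R) (C : set V) (P : V -> V) (F : V -> V)
  (mu : R) (xi : nat -> R) (z w : nat -> V) (lam : nat -> R) :
  is_inner_product ip ->
  C !=set0 -> closed C -> is_convex_set C ->
  is_metric_projection C P ->
  SD ip C F !=set0 ->
  quasimonotone ip F ->
  unif_continuous_op F ->
  0 < mu < 1 ->
  (forall n, 0 <= xi n) -> cvgn (series xi) ->
  0 < lam 0 ->
  algorithm31 P F mu xi z w lam ->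
  (forall n, z n != w n) ->
  (forall x, SD ip C F x -> cvgn (fun n => `|z n - x|)) /\
  ((fun n => `|z n - w n|) @ \oo --> (0 : R)) /\
  ((fun n => `|z n.+1 - z n|) @ \oo --> (0 : R)).
Proof.
move=> hip _ _ C_cvx P_proj [x0 x0_SD] _ F_uc /andP[mu_gt0 mu_lt1].
move=> xi_ge0 xi_sum lam0_gt0 alg z_neq_w.
have [B B_ge0 F_affine] := unif_continuous_op_affine F_uc.
exact: (algorithm31_cvg hip C_cvx P_proj B_ge0 F_affine mu_gt0 mu_lt1
  xi_ge0 xi_sum lam0_gt0 alg z_neq_w x0_SD).
Qed.
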